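(* Let $K\subset\mathbb{R}^m$ be a proper cone which is an $\mathbb{R}^m_+$-isotone projection set. Then exactly one of the following alternatives holds: (1) $K\subset\mathbb{R}^m_+$; (2) $\operatorname{int}(K^* )\cap\mathbb{R}^m_+=\varnothing$.
   Context: $\mathbb{R}^m$ carries the standard inner product and a Cartesian coordinate system; $\mathbb{R}^m_+=\{x:x^i\ge0,\ i=1,\dots,m\}$ and $x\le_{\mathbb{R}^m_+}y$ means $x^i\le y^i$ for all $i$. A proper cone is a closed convex cone that is pointed ($K\cap(-K)=\{0\}$) and generating ($K-K=\mathbb{R}^m$). $K^*=\{y:\langle x,y\rangle\ge0\ \forall x\in K\}$. $K$ is an $\mathbb{R}^m_+$-isotone projection set if $x\le_{\mathbb{R}^m_+}y$ implies $P_Kx\le_{\mathbb{R}^m_+}P_Ky$, where $P_K$ is the metric projection onto $K$. *)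

From HB Require Import structures.
From mathcomp Require Import all_boot all_order all_algebra.
From mathcomp Require Import all_classical all_reals all_analysis.
Set Implicit Arguments. Unset Strict Implicit. Unset Printing Implicit Defensive.
Import Order.TTheory GRing.Theory Num.Theory.
Import numFieldNormedType.Exports.
Local Open Scope classical_set_scope.
Local Open Scope ring_scope.

Section Defs.
Context {R : realType} {m : nat}.
Implicit Types (x y z p : 'rV[R]_m) (K : set 'rV[R]_m).

Definition dotv x y : R := \sum_(i < m) x ord0 i * y ord0 i.

Definition orthant : set 'rV[R]_m := [set x | forall i, 0 <= x ord0 i].

Definition le_orth x y : Prop := forall i, x ord0 i <= y ord0 i.

Definition convex_cone K : Prop :=
  K 0 /\ (forall x y, K x -> K y -> K (x + y)) /\
  (forall (a : R) x, 0 <= a -> K x -> K (a *: x)).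

Definition pointed K : Prop := forall x, K x -> K (- x) -> x = 0.

Definition generating K : Prop := forall z, exists x y, K x /\ K y /\ z = x - y.

Definition proper_cone K : Prop :=
  closed K /\ convex_cone K /\ pointed K /\ generating K.

Definition dual_cone K : set 'rV[R]_m := [set y | forall x, K x -> 0 <= dotv x y].

Definition is_metric_proj K x p : Prop :=
  K p /\ forall z, K z -> dotv (x - p) (x - p) <= dotv (x - z) (x - z).

Definition isotone_projection_set K : Prop :=
  forall x y px py, le_orth x y -> is_metric_proj K x px ->
    is_metric_proj K y py -> le_orth px py.

End Defs.

(** If [K] is not contained in [R^m_+], no strictly positive vector can lie in
    [K^*]: otherwise, for [z] in [K^*] with positive entries and any [x] in [K],
    some [- t z] lies below [x] coordinatewise, and [P_K (- t z) = 0] because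
    [t z] is in [K^*], so isotonicity gives [0 = P_K (- t z) <= P_K x = x].
    An interior point of [K^*] in [R^m_+] can be pushed to such a vector.
    Conversely, if [K] is in [R^m_+] then [R^m_+] is in [K^*], so the all-ones
    vector is an interior point of [K^*] in [R^m_+]. *)
From HB Require Import structures.
From mathcomp Require Import all_boot all_order all_algebra.
From mathcomp Require Import all_classical all_reals all_analysis.
From mathcomp Require Import ring.
Set Implicit Arguments. Unset Strict Implicit. Unset Printing Implicit Defensive.
Import Order.TTheory GRing.Theory Num.Theory.
Import numFieldNormedType.Exports.
Local Open Scope classical_set_scope.
Local Open Scope ring_scope.

Section IsotoneProjection.
Context {R : realType} {m : nat}.
Implicit Types (x y z : 'rV[R]_m) (K S : set 'rV[R]_m).

Lemma ball_row_entry x e y : ball x e y -> forall i, `|x ord0 i - y ord0 i| < e.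
Proof. by case=> _ Bxy i; have := Bxy ord0 i. Qed.

Lemma entry_ball_row x e y : 0 < e ->
  (forall i, `|x ord0 i - y ord0 i| < e) -> ball x e y.
Proof. by move=> e_gt0 Bxy; split => // i j; rewrite (ord1 i); apply: Bxy. Qed.

Lemma interior_orthant_const1 : interior orthant (const_mx 1 : 'rV[R]_m).
Proof.
apply/nbhs_ballP; exists 1 => //= y /ball_row_entry B1y i.
have := le_lt_trans (ler_norm _) (B1y i).
by rewrite mxE ltrBlDr ltrDl => /ltW.
Qed.

Lemma orthant_sub_dual_cone K : K `<=` orthant -> orthant `<=` dual_cone K.
Proof.
by move=> KO y Oy x Kx; apply: sumr_ge0 => i _; apply: mulr_ge0; [apply: KO|].
Qed.

Lemma interior_shift_const S y :
  interior S y -> exists2 c, 0 < c & S (y + const_mx c).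
Proof.
move/nbhs_ballP=> [e e_gt0 BS]; exists (e / 2); first by rewrite divr_gt0.
apply: BS; apply: entry_ball_row => // i.
rewrite !mxE opprD addNKr normrN gtr0_norm ?divr_gt0 //.
by rewrite ltr_pdivrMr // ltr_pMr // ltr1n.
Qed.

Lemma dual_coneZ K a z : 0 <= a -> dual_cone K z -> dual_cone K (a *: z).
Proof.
move=> a_ge0 Kz x Kx; rewrite /dotv; under eq_bigr do rewrite mxE mulrCA.
by rewrite -mulr_sumr mulr_ge0 //; apply: Kz.
Qed.

Lemma dotv0l y : dotv 0 y = 0.
Proof. by rewrite /dotv big1 // => i _; rewrite mxE mul0r. Qed.

Lemma dotv_self_ge0 x : 0 <= dotv x x.
Proof. by apply: sumr_ge0 => i _; rewrite -expr2 sqr_ge0. Qed.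

Lemma is_metric_proj_id K x : K x -> is_metric_proj K x x.
Proof.
split=> // z _; rewrite subrr /dotv big1 ?dotv_self_ge0 // => i _.
by rewrite mxE mulr0.
Qed.

Lemma dotv_subr_opp x z :
  dotv (- z - x) (- z - x) = dotv z z + 2 * dotv x z + dotv x x.
Proof.
rewrite /dotv mulr_sumr -!big_split; apply: eq_bigr => i _.
by rewrite !mxE /=; ring.
Qed.

Lemma is_metric_proj_opp_dual K z :
  K 0 -> dual_cone K z -> is_metric_proj K (- z) 0.
Proof.
move=> K0 Kz; split=> // x Kx.
rewrite !dotv_subr_opp !dotv0l mulr0 !addr0 -addrA lerDl addr_ge0 ?dotv_self_ge0 ?mulr_ge0 //.
exact: Kz.
Qed.

Lemma le_orth_opp_scale x z c : 0 < c -> (forall i, c <= z ord0 i) ->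
  le_orth (- (((\sum_j `|x ord0 j|) / c) *: z)) x.
Proof.
move=> c_gt0 cz i; set s := \sum_j _.
have s_ge0 : 0 <= s by apply: sumr_ge0.
have xs : `|x ord0 i| <= s by rewrite /s (bigD1 i) //= lerDl sumr_ge0.
have sz : s <= s / c * z ord0 i.
  rewrite -{1}(divfK (lt0r_neq0 c_gt0) s); apply: ler_wpM2l (cz i).
  exact: divr_ge0 s_ge0 (ltW c_gt0).
rewrite !mxE lerNl; apply: le_trans sz; apply: le_trans xs.
by rewrite -normrN ler_norm.
Qed.

Lemma isotone_projection_sub_orthant K z c :
  K 0 -> isotone_projection_set K -> dual_cone K z ->
  0 < c -> (forall i, c <= z ord0 i) -> K `<=` orthant.
Proof.
move=> K0 iso Kz c_gt0 cz x Kx i; set t := (\sum_j `|x ord0 j|) / c.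
have t_ge0 : 0 <= t by rewrite divr_ge0 ?sumr_ge0 ?ltW.
have P0 := is_metric_proj_opp_dual K0 (dual_coneZ t_ge0 Kz).
have := iso _ _ _ _ (le_orth_opp_scale x c_gt0 cz) P0 (is_metric_proj_id Kx) i.
by rewrite mxE.
Qed.

End IsotoneProjection.

Theorem corollary3 (R : realType) (m : nat) (K : set 'rV[R]_m) :
  proper_cone K -> isotone_projection_set K ->
  let A1 := K `<=` orthant in
  let A2 := interior (dual_cone K) `&` orthant = set0 in
  (A1 \/ A2) /\ ~ (A1 /\ A2).
Proof.
move=> [_ [[K0 _] _]] iso A1 A2; split.
  have [|/eqP/set0P[y [Ky Oy]]] := EM A2; first by right.
  left; have [c c_gt0 Kz] := interior_shift_const Ky.
  apply: isotone_projection_sub_orthant K0 iso Kz c_gt0 _ => i.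
  by rewrite !mxE lerDr.
move=> [KO /seteqP[A2sub _]].
have O1 : orthant (const_mx 1 : 'rV[R]_m) by move=> i; rewrite mxE.
apply: (A2sub (const_mx 1)); split=> //.
exact: interiorS (orthant_sub_dual_cone KO) _ interior_orthant_const1.
Qed.
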